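(* Let $h>0$ be such that the matrix $I_d+\frac{h^2}{2}\nabla^2F(q)M$ is invertible for every $q\in\mathbb{R}^d$, so that the scheme below defines, for each fixed realization of the Wiener increments, a smooth map $(P^h[n],Q^h[n])\mapsto(P^h[n+1],Q^h[n+1])$. Then this one-step map is conformally symplectic: $$dP^h[n+1]\wedge dQ^h[n+1]=e^{-vh}\,dP^h[n]\wedge dQ^h[n],$$ where $dP\wedge dQ=\sum_{i=1}^d dP_i\wedge dQ_i$.
   Context: Let $d\le m$, let $F\in C^\infty(\mathbb{R}^d,\mathbb{R})$ and $f=\nabla F:\mathbb{R}^d\to\mathbb{R}^d$, let $M\in\mathbb{R}^{d\times d}$ be symmetric positive definite, $v>0$, and $\sigma=(\sigma_1,\dots,\sigma_m)\in\mathbb{R}^{d\times m}$ with $\mathrm{rank}\,\sigma=d$. Let $W=(W_1,\dots,W_m)^\top$ be a standard $m$-dimensional Wiener process. For a step size $h>0$, $t_n=nh$ and $\Delta_{n+1}W=W(t_{n+1})-W(t_n)$, the scheme is: given $(P^h[0],Q^h[0])=(p,q)\in\mathbb{R}^{2d}$, $$P^h[n+1]=e^{-vh}P^h[n]-\tfrac{h^2}{2}\nabla^2F(Q^h[n])MP^h[n+1]-h\big(1+\tfrac{vh}{2}\big)e^{-vh}f(Q^h[n])-\big(1+\tfrac{vh}{2}\big)e^{-vh}\sigma\Delta_{n+1}W,$$ $$Q^h[n+1]=Q^h[n]+h\big(1-\tfrac{vh}{2}\big)e^{vh}MP^h[n+1]+\tfrac{h^2}{2}Mf(Q^h[n])+\tfrac{h}{2}M\sigma\Delta_{n+1}W.$$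 (The first equation is linear in $P^h[n+1]$ and is solved for it.) *)

From mathcomp Require Import ssreflect ssrbool eqtype ssrnat fintype bigop.
From Stdlib Require Import Reals.
Open Scope R_scope.

Definition vec (n : nat) := 'I_n -> R.

Definition vsum {n : nat} (f : 'I_n -> R) : R := \big[Rplus/0]_(i < n) f i.

Definition kdelta {n : nat} (i j : 'I_n) : R := if i == j then 1 else 0.

Definition shift {n : nat} (x : vec n) (i : 'I_n) (t : R) : vec n :=
  fun j => if j == i then x j + t else x j.

Definition is_partial {n : nat} (G : vec n -> R) (i : 'I_n) (x : vec n) (l : R)
  : Prop := derivable_pt_lim (fun t => G (shift x i t)) 0 l.

(* continuity on R^n (all norms are equivalent; sup norm used) *)
Definition continuous_vec {n : nat} (G : vec n -> R) : Prop :=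
  forall x eps, 0 < eps -> exists delta, 0 < delta /\
    forall y : vec n, (forall j, Rabs (y j - x j) < delta) ->
      Rabs (G y - G x) < eps.

Fixpoint Ck {n : nat} (k : nat) (G : vec n -> R) : Prop :=
  match k with
  | O => continuous_vec G
  | S k' => exists dG : 'I_n -> vec n -> R,
      (forall i x, is_partial G i x (dG i x)) /\ (forall i, Ck k' (dG i))
  end.

Definition smooth {n : nat} (G : vec n -> R) : Prop := forall k, Ck k G.

(* Write A(q) = I + (h^2/2) Hess(q) M, so that the P-equation of the scheme
   reads A(q) P1 = e^{-vh} p - c f(q) - noise.  Differentiating it,
   A dP1/dp = e^{-vh} I and A dP1/dq = -c Hess - (h^2/2) D(Hess)[M P1], which
   is a symmetric matrix because third derivatives of F commute.  Since
   Q1 = q + c' M P1 + (terms in q only) with M symmetric, the c'-terms cancel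
   from every wedge product and A^T = I + (h^2/2) M Hess; what remains is
   (A dP1/dp)^T = e^{-vh} I for dp/\dq and the antisymmetric part of the
   symmetric matrix A dP1/dq, i.e. 0, for dq/\dq.  The analytic point is that
   P1 is differentiable in q: P1(p, q + t e_a) - P1(p, q) solves the system
   of A(q) with a right-hand side that is small with t, which gives first
   continuity (absorbing the perturbation) and then the derivative. *)

From HB Require Import structures.
From Stdlib Require Import Reals Lra Psatz FunctionalExtensionality ClassicalEpsilon.
From Coquelicot Require Import Coquelicot.
From mathcomp Require Import ssreflect ssrbool eqtype ssrnat fintype bigop.
Open Scope R_scope.

Lemma Rplus_associative : ssrfun.associative Rplus.
Proof. by move=> *; rewrite Rplus_assoc. Qed.
HB.instance Definition _ :=
  Monoid.isComLaw.Build R 0 Rplus Rplus_associative Rplus_comm Rplus_0_l.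

Section FiniteSums.
Context {n : nat}.
Implicit Types (f g : 'I_n -> R) (x y : vec n) (A : 'I_n -> 'I_n -> R).

Lemma vsum_ext f g : (forall i, f i = g i) -> vsum f = vsum g.
Proof. by move=> fg; apply: eq_bigr => i _. Qed.

Lemma vsum0 : vsum (fun _ : 'I_n => 0) = 0.
Proof. by rewrite /vsum big1. Qed.

Lemma vsumD f g : vsum (fun i => f i + g i) = vsum f + vsum g.
Proof. exact: big_split. Qed.

Lemma vsumMl c f : vsum (fun i => c * f i) = c * vsum f.
Proof. by rewrite /vsum; elim/big_rec2: _ => [|i y1 y2 _ ->]; ring. Qed.

Lemma vsumMr c f : vsum (fun i => f i * c) = vsum f * c.
Proof. by rewrite Rmult_comm -vsumMl; apply: vsum_ext => i; ring. Qed.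

Lemma vsumN f : vsum (fun i => - f i) = - vsum f.
Proof. by rewrite /vsum; elim/big_rec2: _ => [|i y1 y2 _ ->]; ring. Qed.

Lemma vsumB f g : vsum (fun i => f i - g i) = vsum f - vsum g.
Proof. by rewrite /Rminus vsumD vsumN. Qed.

Lemma vsum_swap (F : 'I_n -> 'I_n -> R) :
  vsum (fun i => vsum (fun j => F i j)) = vsum (fun j => vsum (fun i => F i j)).
Proof. exact: exchange_big. Qed.

Lemma kdeltaC (i j : 'I_n) : kdelta i j = kdelta j i.
Proof. by rewrite /kdelta eq_sym. Qed.

Lemma vsum_kdeltar f b : vsum (fun i => f i * kdelta i b) = f b.
Proof.
rewrite /vsum (bigD1 b) //= /kdelta eqxx big1 ?Rplus_0_r ?Rmult_1_r // => i /negPf ->.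
exact: Rmult_0_r.
Qed.

Lemma vsum_kdeltal f b : vsum (fun i => kdelta b i * f i) = f b.
Proof. by rewrite -(vsum_kdeltar f b); apply: vsum_ext => i; rewrite kdeltaC; ring. Qed.

Lemma vsum_le f g : (forall i, f i <= g i) -> vsum f <= vsum g.
Proof.
move=> fg; rewrite /vsum; elim/big_rec2: _ => [|i y1 y2 _ le_y]; first lra.
by have := fg i; lra.
Qed.

Lemma vsum_ge0 f : (forall i, 0 <= f i) -> 0 <= vsum f.
Proof. by move=> f_ge0; rewrite -vsum0; apply: vsum_le. Qed.

Lemma vsum_term_le f j : (forall i, 0 <= f i) -> f j <= vsum f.
Proof.
move=> f_ge0; rewrite /vsum (bigD1 j) //=; set rest := (X in f j + X).
have rest_ge0 : 0 <= rest.
  by rewrite /rest; elim/big_rec: _ => [|i y _ y_ge0]; [lra | have := f_ge0 i; lra].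
lra.
Qed.

Lemma Rabs_vsum_le f : Rabs (vsum f) <= vsum (fun i => Rabs (f i)).
Proof.
rewrite /vsum; elim/big_rec2: _ => [|i y1 y2 _ le_y]; first by rewrite Rabs_R0; lra.
by apply: Rle_trans (Rabs_triang _ _) _; lra.
Qed.

Lemma vsum_sym_form A x y : (forall i j, A i j = A j i) ->
  vsum (fun i => x i * vsum (fun l => A i l * y l)) =
  vsum (fun i => y i * vsum (fun l => A i l * x l)).
Proof.
move=> A_sym.
rewrite (vsum_ext _ (fun i => vsum (fun l => x i * A i l * y l))); last first.
  by move=> i; rewrite -vsumMl; apply: vsum_ext => l; ring.
rewrite vsum_swap; apply: vsum_ext => l; rewrite -vsumMl.
by apply: vsum_ext => i; rewrite A_sym; ring.
Qed.

Lemma vsum_sym_wedge A c x y : (forall i j, A i j = A j i) ->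
  vsum (fun i => x i * (c * vsum (fun l => A i l * y l))
               - y i * (c * vsum (fun l => A i l * x l))) = 0.
Proof.
move=> A_sym; rewrite vsumB.
rewrite (vsum_ext _ (fun i => c * (x i * vsum (fun l => A i l * y l)))); last by move=> i; ring.
rewrite [X in _ - X](vsum_ext _ (fun i => c * (y i * vsum (fun l => A i l * x l))));
  last by move=> i; ring.
by rewrite !vsumMl (vsum_sym_form A x y A_sym); ring.
Qed.

Lemma vsum_mulBl x y (z : vec n) :
  vsum (fun j => (x j - y j) * z j) = vsum (fun j => x j * z j) - vsum (fun j => y j * z j).
Proof. by rewrite -vsumB; apply: vsum_ext => j; ring. Qed.

Lemma vsum_mxv_mxvB A (A' : 'I_n -> 'I_n -> R) x y i :
  vsum (fun j => A i j * vsum (fun k => A' j k * (x k - y k))) =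
  vsum (fun j => A i j * vsum (fun k => A' j k * x k)) -
  vsum (fun j => A i j * vsum (fun k => A' j k * y k)).
Proof.
rewrite -vsumB; apply: vsum_ext => j.
by rewrite -Rmult_minus_distr_l -vsumB; congr (_ * _); apply: vsum_ext => k; ring.
Qed.

End FiniteSums.

Definition norm1 {n : nat} (x : vec n) : R := vsum (fun k => Rabs (x k)).

Definition mxnorm1 {n : nat} (A : 'I_n -> 'I_n -> R) : R := vsum (fun k => norm1 (A k)).

Section Norms.
Context {n : nat}.
Implicit Types (x y w : vec n) (A : 'I_n -> 'I_n -> R).

Lemma norm1_ge0 x : 0 <= norm1 x.
Proof. by apply: vsum_ge0 => k; apply: Rabs_pos. Qed.

Lemma mxnorm1_ge0 A : 0 <= mxnorm1 A.
Proof. by apply: vsum_ge0 => k; apply: norm1_ge0. Qed.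

Lemma Rabs_le_norm1 x k : Rabs (x k) <= norm1 x.
Proof. by apply: (vsum_term_le (fun k => Rabs (x k))) => i; apply: Rabs_pos. Qed.

Lemma norm1D x y : norm1 (fun k => x k + y k) <= norm1 x + norm1 y.
Proof. by rewrite /norm1 -vsumD; apply: vsum_le => k; apply: Rabs_triang. Qed.

Lemma norm1Z c x : norm1 (fun k => c * x k) = Rabs c * norm1 x.
Proof. by rewrite /norm1 -vsumMl; apply: vsum_ext => k; rewrite Rabs_mult. Qed.

Lemma Rabs_dot_le x w : Rabs (vsum (fun l => x l * w l)) <= norm1 x * norm1 w.
Proof.
apply: Rle_trans (Rabs_vsum_le _) _; rewrite /norm1 -vsumMr.
apply: vsum_le => l; rewrite Rabs_mult.
by apply: Rmult_le_compat_l; [apply: Rabs_pos | apply: Rabs_le_norm1].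
Qed.

Lemma norm1_mxv_le A w :
  norm1 (fun k => vsum (fun l => A k l * w l)) <= mxnorm1 A * norm1 w.
Proof. by rewrite /mxnorm1 -vsumMr; apply: vsum_le => k; apply: Rabs_dot_le. Qed.

Lemma norm1_eq0 x : (forall k, x k = 0) -> norm1 x = 0.
Proof.
by move=> x0; rewrite /norm1 -(@vsum0 n); apply: vsum_ext => k; rewrite x0 Rabs_R0.
Qed.

Lemma mxnorm1_eq0 A : (forall k l, A k l = 0) -> mxnorm1 A = 0.
Proof.
by move=> A0; rewrite /mxnorm1 -(@vsum0 n); apply: vsum_ext => k; apply: norm1_eq0.
Qed.

End Norms.

Definition id_plus_mul {n : nat} (c : R) (H M : 'I_n -> 'I_n -> R) : 'I_n -> 'I_n -> R :=
  fun i j => kdelta i j + c * vsum (fun k => H i k * M k j).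

Section Matrices.
Context {n : nat}.
Implicit Types (x y r : vec n) (A B H M : 'I_n -> 'I_n -> R).

Lemma left_inverse_solve A B x y :
  (forall i j, vsum (fun k => B i k * A k j) = kdelta i j) ->
  (forall i, vsum (fun k => A i k * x k) = y i) ->
  forall i, x i = vsum (fun k => B i k * y k).
Proof.
move=> BA Ax_y i.
transitivity (vsum (fun k => vsum (fun l => B i l * A l k) * x k)).
  by rewrite -(vsum_kdeltal x i); apply: vsum_ext => k; rewrite BA.
rewrite [RHS](vsum_ext _ (fun l => vsum (fun k => B i l * (A l k * x k)))); last first.
  by move=> l; rewrite -Ax_y -vsumMl.
rewrite vsum_swap; apply: vsum_ext => k /=.
by rewrite -(vsumMr (x k)); apply: vsum_ext => l; ring.
Qed.

Lemma right_inverse_apply A B r b :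
  (forall i j, vsum (fun k => A i k * B k j) = kdelta i j) ->
  vsum (fun k => A b k * vsum (fun l => B k l * r l)) = r b.
Proof.
move=> AB.
rewrite (vsum_ext _ (fun k => vsum (fun l => A b k * B k l * r l))); last first.
  by move=> k; rewrite -vsumMl; apply: vsum_ext => l; ring.
rewrite vsum_swap -(vsum_kdeltal r b); apply: vsum_ext => l.
by rewrite vsumMr AB.
Qed.

Lemma id_plus_mul_apply c H M x i :
  vsum (fun k => id_plus_mul c H M i k * x k) =
  x i + c * vsum (fun j => H i j * vsum (fun k => M j k * x k)).
Proof.
rewrite (vsum_ext _ (fun k => kdelta i k * x k + c * vsum (fun j => H i j * M j k * x k)));
  last by move=> k; rewrite /id_plus_mul vsumMr; ring.
rewrite vsumD vsum_kdeltal vsumMl; congr (_ + c * _).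
by rewrite vsum_swap; apply: vsum_ext => j; rewrite -vsumMl; apply: vsum_ext => k; ring.
Qed.

Lemma id_plus_mul_apply_sym c H M x b :
  (forall i j, M i j = M j i) -> (forall i j, H i j = H j i) ->
  vsum (fun k => id_plus_mul c H M b k * x k) =
  vsum (fun i => x i * (kdelta i b + c * vsum (fun l => M i l * H l b))).
Proof.
move=> M_sym H_sym; rewrite id_plus_mul_apply.
rewrite [RHS](vsum_ext _ (fun i => x i * kdelta i b + c * (x i * vsum (fun l => M i l * H l b))));
  last by move=> i; ring.
rewrite vsumD vsum_kdeltar vsumMl; congr (_ + c * _).
rewrite [LHS](vsum_ext _ (fun j => vsum (fun i => H b j * M j i * x i))); last first.
  by move=> j; rewrite -vsumMl; apply: vsum_ext => i; ring.
rewrite vsum_swap; apply: vsum_ext => i; rewrite -vsumMl.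
by apply: vsum_ext => l; rewrite M_sym H_sym; ring.
Qed.

End Matrices.

(* The [x]-dependent part of the right-hand side is absorbed on the left. *)
Lemma perturbed_solution_bound {n : nat} (B M dH : 'I_n -> 'I_n -> R) (x df P0 : vec n)
  (c N : R) : 0 <= N ->
  (forall k, x k = vsum (fun l => B k l * (c * df l
     - N * vsum (fun j => dH l j * vsum (fun r => M j r * (P0 r + x r)))))) ->
  mxnorm1 B * N * mxnorm1 M * mxnorm1 dH <= 1/2 ->
  norm1 x <= 2 * (mxnorm1 B * Rabs c * norm1 df
                  + mxnorm1 B * N * mxnorm1 M * mxnorm1 dH * norm1 P0).
Proof.
move=> N_ge0 x_eq small.
set w := fun l => c * df l
  + (- N) * vsum (fun j => dH l j * vsum (fun r => M j r * (P0 r + x r))).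
have x_le : norm1 x <= mxnorm1 B * norm1 w.
  rewrite (_ : x = fun k => vsum (fun l => B k l * w l)); first exact: norm1_mxv_le.
  apply: functional_extensionality => k; rewrite x_eq; apply: vsum_ext => l.
  by rewrite /w; ring.
have MPx_le : norm1 (fun j => vsum (fun r => M j r * (P0 r + x r)))
              <= mxnorm1 M * (norm1 P0 + norm1 x).
  apply: Rle_trans (norm1_mxv_le _ _) _.
  by apply: Rmult_le_compat_l; [apply: mxnorm1_ge0 | apply: norm1D].
have w_le : norm1 w <= Rabs c * norm1 df
                      + N * (mxnorm1 dH * (mxnorm1 M * (norm1 P0 + norm1 x))).
  apply: Rle_trans (norm1D _ _) _; rewrite !norm1Z Rabs_Ropp (Rabs_pos_eq N) //.
  apply: Rplus_le_compat_l; apply: Rmult_le_compat_l => //.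
  apply: Rle_trans (norm1_mxv_le _ _) _.
  by apply: Rmult_le_compat_l; [apply: mxnorm1_ge0 | apply: MPx_le].
have := norm1_ge0 x; have := norm1_ge0 P0; have := norm1_ge0 df.
have := mxnorm1_ge0 B; have := mxnorm1_ge0 M; have := mxnorm1_ge0 dH.
have := Rabs_pos c; have := Rmult_le_compat_l _ _ _ (mxnorm1_ge0 B) w_le.
nra.
Qed.

(* Stdlib states these rules with [plus_fct] etc.; the pointwise forms unify
   with the lambda terms arising below. *)
Lemma derivable_pt_lim_add f g x l1 l2 :
  derivable_pt_lim f x l1 -> derivable_pt_lim g x l2 ->
  derivable_pt_lim (fun t => f t + g t) x (l1 + l2).
Proof. exact: derivable_pt_lim_plus. Qed.

Lemma derivable_pt_lim_sub f g x l1 l2 :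
  derivable_pt_lim f x l1 -> derivable_pt_lim g x l2 ->
  derivable_pt_lim (fun t => f t - g t) x (l1 - l2).
Proof. exact: derivable_pt_lim_minus. Qed.

Lemma derivable_pt_lim_mulc c f x l :
  derivable_pt_lim f x l -> derivable_pt_lim (fun t => c * f t) x (c * l).
Proof. exact: derivable_pt_lim_scal. Qed.

Lemma derivable_pt_lim_cst c x : derivable_pt_lim (fun _ => c) x 0.
Proof. exact: derivable_pt_lim_const. Qed.

Lemma continuity_pt_sub f g x :
  continuity_pt f x -> continuity_pt g x -> continuity_pt (fun t => f t - g t) x.
Proof. exact: continuity_pt_minus. Qed.

Lemma continuity_pt_mulc c f x :
  continuity_pt f x -> continuity_pt (fun t => c * f t) x.
Proof. exact: continuity_pt_scal. Qed.

Lemma derivable_pt_lim_eq_val f x l l' :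
  derivable_pt_lim f x l -> l = l' -> derivable_pt_lim f x l'.
Proof. by move=> + <-. Qed.

Lemma derivable_pt_lim_affine c l : derivable_pt_lim (fun t => c + t * l) 0 l.
Proof.
move=> eps eps_gt0; exists (mkposreal _ Rlt_0_1) => t t_neq0 _.
have -> : (c + (0 + t) * l - (c + 0 * l)) / t - l = 0 by field.
by rewrite Rabs_R0.
Qed.

Lemma derivable_pt_lim_translate f u l :
  derivable_pt_lim (fun t => f (u + t)) 0 l -> derivable_pt_lim f u l.
Proof.
move=> df eps eps_gt0; case: (df eps eps_gt0) => del Hdel; exists del => t t_neq0 t_small.
by have := Hdel t t_neq0 t_small; rewrite Rplus_0_l Rplus_0_r.
Qed.

Lemma derivable_pt_lim_vsum {n : nat} (g : 'I_n -> R -> R) (l : 'I_n -> R) x :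
  (forall i, derivable_pt_lim (g i) x (l i)) ->
  derivable_pt_lim (fun t => vsum (fun i => g i t)) x (vsum l).
Proof.
elim: n g l => [|n IH] g l dg.
  rewrite /vsum big_ord0.
  rewrite (_ : (fun t => _) = fun _ => 0); first exact: derivable_pt_lim_cst.
  by apply: functional_extensionality => t; rewrite big_ord0.
rewrite /vsum big_ord_recr /=.
rewrite (_ : (fun t => _) = fun t => vsum (fun i : 'I_n => g (widen_ord (leqnSn n) i) t)
                                     + g ord_max t); last first.
  by apply: functional_extensionality => t; rewrite /vsum big_ord_recr.
by apply: derivable_pt_lim_add; [apply: IH | apply: dg].
Qed.

Lemma continuity_pt_vsum {n : nat} (g : 'I_n -> R -> R) x :
  (forall i, continuity_pt (g i) x) -> continuity_pt (fun t => vsum (fun i => g i t)) x.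
Proof.
elim: n g => [|n IH] g cg.
  rewrite (_ : (fun t => _) = fun _ => 0); first exact: continuity_pt_const.
  by apply: functional_extensionality => t; rewrite /vsum big_ord0.
rewrite (_ : (fun t => _) = fun t => vsum (fun i : 'I_n => g (widen_ord (leqnSn n) i) t)
                                     + g ord_max t); last first.
  by apply: functional_extensionality => t; rewrite /vsum big_ord_recr.
by apply: (continuity_pt_plus (fun t => vsum _) (g ord_max)); [apply: IH | apply: cg].
Qed.

Lemma continuity_pt_norm1 {n : nat} (x : R -> vec n) t0 :
  (forall k, continuity_pt (fun t => x t k) t0) -> continuity_pt (fun t => norm1 (x t)) t0.
Proof.
move=> cx; apply: (continuity_pt_vsum (fun k t => Rabs (x t k))) => k.
by apply: (continuity_pt_comp (fun t => x t k) Rabs) => //; apply: Rcontinuity_abs.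
Qed.

Lemma continuity_pt_mxnorm1 {n : nat} (A : R -> 'I_n -> 'I_n -> R) t0 :
  (forall k l, continuity_pt (fun t => A t k l) t0) ->
  continuity_pt (fun t => mxnorm1 (A t)) t0.
Proof.
move=> cA; apply: (continuity_pt_vsum (fun k t => norm1 (A t k))) => k.
by apply: continuity_pt_norm1.
Qed.

Lemma continuity_pt_eps f x : continuity_pt f x <-> forall eps, 0 < eps ->
  exists del, 0 < del /\ forall y, Rabs (y - x) < del -> Rabs (f y - f x) < eps.
Proof.
split=> cf eps eps_gt0; case: (cf eps eps_gt0) => del [del_gt0 Hdel]; exists del.
  split=> // y y_close; case: (Req_dec y x) => [->|y_neq_x].
    by rewrite Rminus_diag Rabs_R0.
  exact: (Hdel y (conj (conj I (not_eq_sym y_neq_x)) y_close)).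
by split=> // y [_ y_close]; apply: Hdel.
Qed.

Lemma continuity_pt_of_bound (K Z c : R -> R) :
  continuity_pt K 0 -> K 0 = 0 -> continuity_pt Z 0 -> Z 0 = 0 ->
  (forall t, K t <= 1/2 -> Rabs (c t - c 0) <= Z t) -> continuity_pt c 0.
Proof.
move=> /continuity_pt_eps cK K0 /continuity_pt_eps cZ Z0 c_le.
apply/continuity_pt_eps => eps eps_gt0.
case: (cK (1/2)) => [|d1 [d1_gt0 Hd1]]; first lra.
case: (cZ eps eps_gt0) => d2 [d2_gt0 Hd2].
exists (Rmin d1 d2); split=> [|y y_close]; first exact: Rmin_pos.
have := Hd1 y (Rlt_le_trans _ _ _ y_close (Rmin_l _ _)).
have := Hd2 y (Rlt_le_trans _ _ _ y_close (Rmin_r _ _)).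
rewrite K0 Z0 !Rminus_0_r => Zy Ky.
have := c_le y; have := Rle_abs (K y); have := Rle_abs (Z y); lra.
Qed.

Lemma derivable_pt_lim_mul_vanishing (g p : R -> R) l :
  g 0 = 0 -> derivable_pt_lim g 0 l -> continuity_pt p 0 ->
  derivable_pt_lim (fun t => g t * p t) 0 (l * p 0).
Proof.
move=> g0 /uniqueness_step2 dg cp; apply: uniqueness_step3.
have cp' : limit1_in (fun t => p (0 + t)) (fun t => t <> 0) (p 0) 0.
  move=> eps eps_gt0; case: (cp eps eps_gt0) => del [del_gt0 Hdel].
  exists del; split=> // t [t_neq0 t_close]; rewrite Rplus_0_l.
  exact: (Hdel t (conj (conj I (not_eq_sym t_neq0)) t_close)).
rewrite (_ : (fun t => _) = fun t => (g (0 + t) - g 0) / t * p (0 + t)).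
  exact: limit_mul dg cp'.
by apply: functional_extensionality => t; rewrite g0 /Rdiv; ring.
Qed.

Section Partials.
Context {n : nat}.
Implicit Types (x : vec n) (G : vec n -> R).

Lemma shift0 x i : shift x i 0 = x.
Proof. by apply: functional_extensionality => j; rewrite /shift; case: eqP => _ //; ring. Qed.

Lemma shift_shift x k u t : shift (shift x k u) k t = shift x k (u + t).
Proof.
by apply: functional_extensionality => i; rewrite /shift; case: (eqVneq i k) => _ //; ring.
Qed.

Lemma shiftC x j k u v : j != k -> shift (shift x j u) k v = shift (shift x k v) j u.
Proof.
move=> jk; apply: functional_extensionality => i; rewrite /shift.
case: (eqVneq i k) => [->|ik]; first by rewrite eq_sym (negPf jk).
by case: (eqVneq i j).
Qed.

Lemma is_partial_unique G i x l1 l2 :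
  is_partial G i x l1 -> is_partial G i x l2 -> l1 = l2.
Proof. exact: uniqueness_limite. Qed.

Lemma is_partial_coord x a i : is_partial (fun y => y i) a x (kdelta i a).
Proof.
rewrite /is_partial /shift /kdelta; case: eqP => _; last exact: derivable_pt_lim_cst.
rewrite (_ : (fun t => x i + t) = fun t => x i + t * 1); first exact: derivable_pt_lim_affine.
by apply: functional_extensionality => t; ring.
Qed.

Lemma is_partial_continuity_pt G i x l :
  is_partial G i x l -> continuity_pt (fun t => G (shift x i t)) 0.
Proof. by move=> dG; apply: derivable_continuous_pt; exists l. Qed.

Lemma is_derive_along G G' j x u :
  (forall y, is_partial G j y (G' y)) ->
  is_derive (fun t => G (shift x j t)) u (G' (shift x j u)).
Proof.
move=> dG; apply/is_derive_Reals; apply: derivable_pt_lim_translate.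
rewrite (_ : (fun t => _) = fun t => G (shift (shift x j u) j t)); first exact: dG.
by apply: functional_extensionality => t; rewrite shift_shift.
Qed.

Lemma continuity_2d_pt_shift G x j k :
  continuous_vec G -> continuity_2d_pt (fun u v => G (shift (shift x j u) k v)) 0 0.
Proof.
move=> cG eps; case: (cG (shift (shift x j 0) k 0) eps (cond_pos eps)) => del [del_gt0 Hdel].
have del2_gt0 : 0 < del / 2 by lra.
exists (mkposreal _ del2_gt0) => u v /=; rewrite !Rminus_0_r => u_small v_small.
apply: Hdel => i; have := Rabs_pos u; have := Rabs_pos v.
rewrite /shift; case: (i == k); case: (i == j) => *.
- rewrite (_ : _ - _ = u + v); last ring.
  by apply: Rle_lt_trans (Rabs_triang _ _) _; lra.
- by rewrite (_ : _ - _ = v); [lra | ring].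
- by rewrite (_ : _ - _ = u); [lra | ring].
- by rewrite Rminus_diag Rabs_R0; lra.
Qed.

Lemma second_partials_sym G (g1 : 'I_n -> vec n -> R) (g2 : 'I_n -> 'I_n -> vec n -> R) :
  (forall j x, is_partial G j x (g1 j x)) ->
  (forall j k x, is_partial (g1 j) k x (g2 j k x)) ->
  (forall j k, continuous_vec (g2 j k)) ->
  forall j k x, g2 j k x = g2 k j x.
Proof.
move=> dG dg1 cg2 j k x; case: (eqVneq j k) => [->//|jk].
pose s u v := shift (shift x j u) k v.
have Du : forall G0 G1, (forall y, is_partial G0 j y (G1 y)) ->
    forall u v, is_derive (fun z => G0 (s z v)) u (G1 (s u v)).
  move=> G0 G1 dG0 u v; rewrite /s shiftC //.
  rewrite (_ : (fun z => _) = fun z => G0 (shift (shift x k v) j z)).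
    exact: is_derive_along.
  by apply: functional_extensionality => z; rewrite shiftC.
have Dv : forall G0 G1, (forall y, is_partial G0 k y (G1 y)) ->
    forall u v, is_derive (fun z => G0 (s u z)) v (G1 (s u v)).
  by move=> G0 G1 dG0 u v; apply: is_derive_along.
pose phi u v := G (s u v).
have Dvu : (fun u v => Derive (fun z => Derive (fun t => phi z t) v) u) =
           (fun u v => g2 k j (s u v)).
  apply: functional_extensionality => u; apply: functional_extensionality => v.
  rewrite (_ : (fun z => _) = fun z => g1 k (s z v)); last first.
    by apply: functional_extensionality => z; apply: is_derive_unique; apply: Dv.
  by apply: is_derive_unique; apply: Du.
have Duv : (fun u v => Derive (fun z => Derive (fun t => phi t z) u) v) =
           (fun u v => g2 j k (s u v)).
  apply: functional_extensionality => u; apply: functional_extensionality => v.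
  rewrite (_ : (fun z => _) = fun z => g1 j (s u z)); last first.
    by apply: functional_extensionality => z; apply: is_derive_unique; apply: Du.
  by apply: is_derive_unique; apply: Dv.
have := Schwarz phi 0 0.
move: (equal_f (equal_f Dvu 0) 0) (equal_f (equal_f Duv 0) 0) => /= -> ->.
rewrite /s !shift0 => schwarz; symmetry; apply: schwarz.
- exists (mkposreal _ Rlt_0_1) => u v _ _; split; [|split; [|split]].
  + by eexists; apply: Du.
  + by eexists; apply: Dv.
  + rewrite (_ : (fun z => _) = fun z => g1 k (s z v)); first by eexists; apply: Du.
    by apply: functional_extensionality => z; apply: is_derive_unique; apply: Dv.
  + rewrite (_ : (fun z => _) = fun z => g1 j (s u z)); first by eexists; apply: Dv.
    by apply: functional_extensionality => z; apply: is_derive_unique; apply: Du.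
- by rewrite Dvu; apply: continuity_2d_pt_shift.
- by rewrite Duv; apply: continuity_2d_pt_shift.
Qed.

Lemma Ck_partial k G (g : 'I_n -> vec n -> R) :
  Ck k.+1 G -> (forall i x, is_partial G i x (g i x)) -> forall i, Ck k (g i).
Proof.
case=> dG [dGP CkdG] dGg i.
rewrite (_ : g i = dG i); first exact: CkdG.
apply: functional_extensionality => x.
exact: is_partial_unique (dGg i x) (dGP i x).
Qed.

End Partials.

Section SmoothPotential.
Context {n : nat} {F : vec n -> R} {f : vec n -> vec n} {Hess : vec n -> 'I_n -> 'I_n -> R}.
Hypothesis F_smooth : smooth F.
Hypothesis df : forall x i, is_partial F i x (f x i).
Hypothesis dff : forall x i j, is_partial (fun y => f y i) j x (Hess x i j).

Lemma smooth_Ck_hessian k i j : Ck k (fun y => Hess y i j).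
Proof.
apply: (Ck_partial k (fun y => f y i) (fun j y => Hess y i j)) => [|a x]; last exact: dff.
by apply: (Ck_partial k.+1 F (fun i y => f y i)) => // a x; apply: df.
Qed.

Lemma smooth_hessian_sym x i j : Hess x i j = Hess x j i.
Proof.
apply: (second_partials_sym F (fun i y => f y i) (fun i j y => Hess y i j)) => //.
by move=> a b; apply: smooth_Ck_hessian 0%nat a b.
Qed.

Lemma smooth_third_partials : exists T : 'I_n -> 'I_n -> 'I_n -> vec n -> R,
  (forall i j a x, is_partial (fun y => Hess y i j) a x (T i j a x)) /\
  (forall i j a x, T i j a x = T a j i x).
Proof.
have [D dD] := choice (fun (ij : 'I_n * 'I_n) (D : 'I_n -> vec n -> R) =>
    (forall a x, is_partial (fun y => Hess y (fst ij) (snd ij)) a x (D a x)) /\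
    (forall a, continuous_vec (D a))) (fun ij => smooth_Ck_hessian 1 (fst ij) (snd ij)).
pose T i j := D (i, j).
have dT i j a x : is_partial (fun y => Hess y i j) a x (T i j a x) := proj1 (dD (i, j)) a x.
have T_sym23 i j a x : T i j a x = T i a j x.
  apply: (second_partials_sym (fun y => f y i) (fun j y => Hess y i j) (T i)).
  - by move=> b y; apply: dff.
  - exact: dT.
  - by move=> b; apply: (proj2 (dD (i, b))).
have T_sym12 i j a x : T i j a x = T j i a x.
  apply: (is_partial_unique _ _ _ _ _ (dT i j a x)).
  rewrite (_ : (fun y => _) = fun y => Hess y j i); first exact: dT.
  by apply: functional_extensionality => y; apply: smooth_hessian_sym.
exists T; split=> [|i j a x]; first exact: dT.
by rewrite T_sym12 T_sym23 T_sym12.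
Qed.

End SmoothPotential.

Section Scheme.
Context {d m : nat} {Hess : vec d -> 'I_d -> 'I_d -> R} {f : vec d -> vec d}
  {M : 'I_d -> 'I_d -> R} {v h : R} {sigma : 'I_d -> 'I_m -> R} {dW : vec m}
  {P1 Q1 : vec d -> vec d -> vec d} {T : 'I_d -> 'I_d -> 'I_d -> vec d -> R}
  {B : vec d -> 'I_d -> 'I_d -> R}.

Local Notation N := (h ^ 2 / 2).
Local Notation A q := (id_plus_mul N (Hess q) M).
Local Notation cf := (h * (1 + v * h / 2) * exp (- v * h)).
Local Notation cp := (h * (1 - v * h / 2) * exp (v * h)).
Local Notation noise i := ((1 + v * h / 2) * exp (- v * h) * vsum (fun r => sigma i r * dW r)).

Hypothesis M_sym : forall i j, M i j = M j i.
Hypothesis Hess_sym : forall x i j, Hess x i j = Hess x j i.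
Hypothesis dff : forall x i j, is_partial (fun y => f y i) j x (Hess x i j).
Hypothesis dHess : forall i j a x, is_partial (fun y => Hess y i j) a x (T i j a x).
Hypothesis T_sym : forall i j a x, T i j a x = T a j i x.
Hypothesis AB : forall q i j, vsum (fun k => A q i k * B q k j) = kdelta i j.
Hypothesis BA : forall q i j, vsum (fun k => B q i k * A q k j) = kdelta i j.
Hypothesis P1_def : forall p q i,
  P1 p q i = exp (- v * h) * p i
    - N * vsum (fun j => Hess q i j * vsum (fun k => M j k * P1 p q k))
    - cf * f q i - noise i.
Hypothesis Q1_def : forall p q i,
  Q1 p q i = q i + cp * vsum (fun k => M i k * P1 p q k)
    + N * vsum (fun k => M i k * f q k)
    + h / 2 * vsum (fun k => M i k * vsum (fun r => sigma k r * dW r)).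

Lemma P1_linear_system p q i :
  vsum (fun k => A q i k * P1 p q k) = exp (- v * h) * p i - cf * f q i - noise i.
Proof. by rewrite id_plus_mul_apply {1}P1_def; ring. Qed.

Lemma P1_shift_p p q a t k :
  P1 (shift p a t) q k = P1 p q k + t * (exp (- v * h) * B q k a).
Proof.
have diff : forall k, P1 (shift p a t) q k - P1 p q k =
    vsum (fun l => B q k l * (exp (- v * h) * (t * kdelta l a))).
  apply: (left_inverse_solve (A q) (B q)) => // i.
  rewrite (vsum_ext _ (fun k => A q i k * P1 (shift p a t) q k - A q i k * P1 p q k));
    last by move=> l; ring.
  by rewrite vsumB !P1_linear_system /shift /kdelta; case: eqP => _; ring.
move: (diff k); rewrite (vsum_ext _ (fun l => t * exp (- v * h) * B q k l * kdelta l a)).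
  by rewrite vsum_kdeltar; lra.
by move=> l; ring.
Qed.

(* Right-hand side of the system of [A q] solved by [P1] at [q + t e_a]. *)
Local Notation defect p q a t l := (- cf * (f (shift q a t) l - f q l)
  - N * vsum (fun j => (Hess (shift q a t) l j - Hess q l j)
                       * vsum (fun r => M j r * P1 p (shift q a t) r))).

Lemma P1_shift_q p q a t k :
  P1 p (shift q a t) k - P1 p q k = vsum (fun l => B q k l * defect p q a t l).
Proof.
move: k; apply: (left_inverse_solve (A q) (B q)) => // i.
have := P1_linear_system p (shift q a t) i; have := P1_linear_system p q i.
by rewrite !id_plus_mul_apply vsum_mxv_mxvB vsum_mulBl; nra.
Qed.

Lemma P1_continuous_q p q a k : continuity_pt (fun t => P1 p (shift q a t) k) 0.
Proof.
pose dH t l j := Hess (shift q a t) l j - Hess q l j.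
pose df t l := f (shift q a t) l - f q l.
pose K t := mxnorm1 (B q) * N * mxnorm1 M * mxnorm1 (dH t).
have dH0 : mxnorm1 (dH 0) = 0.
  by apply: mxnorm1_eq0 => l j; rewrite /dH shift0 Rminus_diag.
have df0 : norm1 (df 0) = 0 by apply: norm1_eq0 => l; rewrite /df shift0 Rminus_diag.
have cdH : continuity_pt (fun t => mxnorm1 (dH t)) 0.
  apply: continuity_pt_mxnorm1 => l j; apply: continuity_pt_sub.
    exact: is_partial_continuity_pt (dHess l j a q).
  exact: continuity_pt_const.
have cdf : continuity_pt (fun t => norm1 (df t)) 0.
  apply: continuity_pt_norm1 => l; apply: continuity_pt_sub.
    exact: is_partial_continuity_pt (dff q l a).
  exact: continuity_pt_const.
apply: (continuity_pt_of_bound K (fun t => 2 * (mxnorm1 (B q) * Rabs (- cf) * norm1 (df t)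
                                                + K t * norm1 (P1 p q)))).
- exact: continuity_pt_mulc.
- by rewrite /K dH0; ring.
- apply: continuity_pt_mulc; apply: continuity_pt_plus; first exact: continuity_pt_mulc.
  by apply: (continuity_pt_mult K (fun _ => norm1 (P1 p q))); [apply: continuity_pt_mulc |
    apply: continuity_pt_const].
- by rewrite /K dH0 df0; ring.
move=> t Kt; rewrite shift0.
apply: Rle_trans (Rabs_le_norm1 (fun k => P1 p (shift q a t) k - P1 p q k) k) _.
apply: perturbed_solution_bound => // [|k']; first by have := pow2_ge_0 h; lra.
rewrite P1_shift_q; apply: vsum_ext => l; rewrite /df /dH.
by congr (_ * (_ - N * _)); apply: vsum_ext => j; congr (_ * _); apply: vsum_ext => r; ring.
Qed.

Definition dP1_dp (q : vec d) i a := exp (- v * h) * B q i a.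

Definition dP1_dq_rhs p q k a :=
  - cf * Hess q k a - N * vsum (fun j => T k j a q * vsum (fun l => M j l * P1 p q l)).

Definition dP1_dq p q i a := vsum (fun k => B q i k * dP1_dq_rhs p q k a).

Definition dQ1_dp q i a := cp * vsum (fun l => M i l * dP1_dp q l a).

Definition dQ1_dq p q i a := kdelta i a + cp * vsum (fun l => M i l * dP1_dq p q l a)
  + N * vsum (fun l => M i l * Hess q l a).

Lemma P1_partial_p p q i a : is_partial (fun p' => P1 p' q i) a p (dP1_dp q i a).
Proof.
rewrite /is_partial (_ : (fun t => _) = fun t => P1 p q i + t * dP1_dp q i a).
  exact: derivable_pt_lim_affine.
by apply: functional_extensionality => t; rewrite P1_shift_p.
Qed.

Lemma P1_partial_q p q i a : is_partial (fun q' => P1 p q' i) a q (dP1_dq p q i a).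
Proof.
rewrite /is_partial (_ : (fun t => _) =
    fun t => P1 p q i + vsum (fun l => B q i l * defect p q a t l)); last first.
  by apply: functional_extensionality => t; rewrite -P1_shift_q; ring.
eapply derivable_pt_lim_eq_val.
  apply: derivable_pt_lim_add; first exact: derivable_pt_lim_cst.
  apply: (derivable_pt_lim_vsum (fun l t => B q i l * defect p q a t l)) => l.
  apply: derivable_pt_lim_mulc; apply: derivable_pt_lim_sub.
    apply: derivable_pt_lim_mulc; apply: derivable_pt_lim_sub; first exact: dff.
    exact: derivable_pt_lim_cst.
  apply: derivable_pt_lim_mulc.
  apply: (derivable_pt_lim_vsum (fun j t => (Hess (shift q a t) l j - Hess q l j)
                         * vsum (fun r => M j r * P1 p (shift q a t) r))) => j.
  apply: derivable_pt_lim_mul_vanishing.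
  - by rewrite shift0 Rminus_diag.
  - by apply: derivable_pt_lim_sub; [apply: dHess | apply: derivable_pt_lim_cst].
  - apply: (continuity_pt_vsum (fun r t => M j r * P1 p (shift q a t) r)) => r.
    by apply: continuity_pt_mulc; apply: P1_continuous_q.
rewrite Rplus_0_l /dP1_dq; apply: vsum_ext => l; rewrite /dP1_dq_rhs shift0.
by congr (_ * (_ - N * _)); [ring | apply: vsum_ext => j; ring].
Qed.

Lemma Q1_partial_p p q i a : is_partial (fun p' => Q1 p' q i) a p (dQ1_dp q i a).
Proof.
rewrite /is_partial (_ : (fun t => _) = fun t => q i
    + cp * vsum (fun k => M i k * P1 (shift p a t) q k)
    + N * vsum (fun k => M i k * f q k)
    + h / 2 * vsum (fun k => M i k * vsum (fun r => sigma k r * dW r))); last first.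
  by apply: functional_extensionality => t; rewrite Q1_def.
eapply derivable_pt_lim_eq_val.
  apply: derivable_pt_lim_add; last exact: derivable_pt_lim_cst.
  apply: derivable_pt_lim_add; last exact: derivable_pt_lim_cst.
  apply: derivable_pt_lim_add; first exact: derivable_pt_lim_cst.
  apply: derivable_pt_lim_mulc.
  apply: (derivable_pt_lim_vsum (fun k t => M i k * P1 (shift p a t) q k)) => k.
  by apply: derivable_pt_lim_mulc; apply: P1_partial_p.
by rewrite /dQ1_dp; ring.
Qed.

Lemma Q1_partial_q p q i a : is_partial (fun q' => Q1 p q' i) a q (dQ1_dq p q i a).
Proof.
rewrite /is_partial (_ : (fun t => _) = fun t => shift q a t i
    + cp * vsum (fun k => M i k * P1 p (shift q a t) k)
    + N * vsum (fun k => M i k * f (shift q a t) k)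
    + h / 2 * vsum (fun k => M i k * vsum (fun r => sigma k r * dW r))); last first.
  by apply: functional_extensionality => t; rewrite Q1_def.
eapply derivable_pt_lim_eq_val.
  apply: derivable_pt_lim_add; last exact: derivable_pt_lim_cst.
  apply: derivable_pt_lim_add.
    apply: derivable_pt_lim_add; first exact: (is_partial_coord q a i).
    apply: derivable_pt_lim_mulc.
    apply: (derivable_pt_lim_vsum (fun k t => M i k * P1 p (shift q a t) k)) => k.
    by apply: derivable_pt_lim_mulc; apply: P1_partial_q.
  apply: derivable_pt_lim_mulc.
  apply: (derivable_pt_lim_vsum (fun k t => M i k * f (shift q a t) k)) => k.
  by apply: derivable_pt_lim_mulc; apply: dff.
by rewrite /dQ1_dq; ring.
Qed.

Lemma dP1_dq_rhs_sym p q a b : dP1_dq_rhs p q b a = dP1_dq_rhs p q a b.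
Proof.
rewrite /dP1_dq_rhs Hess_sym; congr (_ - N * _).
by apply: vsum_ext => j; rewrite T_sym.
Qed.

Lemma A_dP1_dq p q a b : vsum (fun k => A q b k * dP1_dq p q k a) = dP1_dq_rhs p q b a.
Proof. exact: right_inverse_apply (AB q). Qed.

Lemma wedge_dp_dp q a b :
  vsum (fun i => dP1_dp q i a * dQ1_dp q i b - dP1_dp q i b * dQ1_dp q i a) = 0.
Proof. exact: (vsum_sym_wedge M cp (fun l => dP1_dp q l a) (fun l => dP1_dp q l b)). Qed.

Lemma wedge_dq_dq p q a b :
  vsum (fun i => dP1_dq p q i a * dQ1_dq p q i b - dP1_dq p q i b * dQ1_dq p q i a) = 0.
Proof.
pose x i := dP1_dq p q i a; pose y i := dP1_dq p q i b.
rewrite (vsum_ext _ (fun i =>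
    (x i * (kdelta i b + N * vsum (fun l => M i l * Hess q l b))
     - y i * (kdelta i a + N * vsum (fun l => M i l * Hess q l a)))
    + (x i * (cp * vsum (fun l => M i l * y l)) - y i * (cp * vsum (fun l => M i l * x l)))));
  last by move=> i; rewrite /x /y /dQ1_dq /=; ring.
rewrite vsumD vsum_sym_wedge // vsumB.
rewrite -(id_plus_mul_apply_sym N (Hess q) M x b) // -(id_plus_mul_apply_sym N (Hess q) M y a) //.
by rewrite /x /y !A_dP1_dq dP1_dq_rhs_sym; ring.
Qed.

Lemma wedge_dp_dq p q a b :
  vsum (fun i => dP1_dp q i a * dQ1_dq p q i b - dP1_dq p q i b * dQ1_dp q i a)
  = exp (- v * h) * kdelta a b.
Proof.
pose x i := dP1_dp q i a; pose y i := dP1_dq p q i b.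
rewrite (vsum_ext _ (fun i => x i * (kdelta i b + N * vsum (fun l => M i l * Hess q l b))
    + (x i * (cp * vsum (fun l => M i l * y l)) - y i * (cp * vsum (fun l => M i l * x l)))));
  last by move=> i; rewrite /x /y /dQ1_dq /dQ1_dp /=; ring.
rewrite vsumD vsum_sym_wedge // -(id_plus_mul_apply_sym N (Hess q) M x b) // Rplus_0_r.
rewrite /x /dP1_dp (vsum_ext _ (fun k => exp (- v * h) * (A q b k * B q k a))).
  by rewrite vsumMl AB kdeltaC.
by move=> k; ring.
Qed.

Lemma scheme_conformally_symplectic :
  exists (Pp Pq Qp Qq : vec d -> vec d -> 'I_d -> 'I_d -> R),
    (forall p q i a,
       is_partial (fun p' => P1 p' q i) a p (Pp p q i a) /\
       is_partial (fun q' => P1 p q' i) a q (Pq p q i a) /\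
       is_partial (fun p' => Q1 p' q i) a p (Qp p q i a) /\
       is_partial (fun q' => Q1 p q' i) a q (Qq p q i a)) /\
    (forall p q a b,
       vsum (fun i => Pp p q i a * Qp p q i b - Pp p q i b * Qp p q i a) = 0 /\
       vsum (fun i => Pq p q i a * Qq p q i b - Pq p q i b * Qq p q i a) = 0 /\
       vsum (fun i => Pp p q i a * Qq p q i b - Pq p q i b * Qp p q i a)
         = exp (- v * h) * kdelta a b).
Proof.
exists (fun _ => dP1_dp), dP1_dq, (fun _ => dQ1_dp), dQ1_dq; split=> p q.
- by move=> i a; do ![split]; [apply: P1_partial_p | apply: P1_partial_q |
                                apply: Q1_partial_p | apply: Q1_partial_q].
- by move=> a b; do ![split]; [apply: wedge_dp_dp | apply: wedge_dq_dq | apply: wedge_dp_dq].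
Qed.

End Scheme.

Theorem theorem3p1
  (d m : nat) (Hdm : leq d m)
  (F : vec d -> R) (f : vec d -> vec d) (Hess : vec d -> 'I_d -> 'I_d -> R)
  (HFsmooth : smooth F)
  (Hgrad : forall x i, is_partial F i x (f x i))
  (HHess : forall x i j, is_partial (fun y => f y i) j x (Hess x i j))
  (M : 'I_d -> 'I_d -> R)
  (HMsym : forall i j, M i j = M j i)
  (HMpd : forall x : vec d, (exists i, x i <> 0) ->
            0 < vsum (fun i => vsum (fun j => x i * M i j * x j)))
  (v : R) (Hv : 0 < v)
  (sigma : 'I_d -> 'I_m -> R)
  (Hrank : forall y : vec d, (forall r, vsum (fun i => y i * sigma i r) = 0) ->
             forall i, y i = 0)
  (h : R) (Hh : 0 < h)
  (Hinv : forall q : vec d, exists B : 'I_d -> 'I_d -> R,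
     let A := fun i j => kdelta i j + h ^ 2 / 2 * vsum (fun k => Hess q i k * M k j) in
     (forall i j, vsum (fun k => A i k * B k j) = kdelta i j) /\
     (forall i j, vsum (fun k => B i k * A k j) = kdelta i j)) :
  forall (dW : vec m) (P1 Q1 : vec d -> vec d -> vec d),
  (forall p q i,
     P1 p q i = exp (- v * h) * p i
       - h ^ 2 / 2 * vsum (fun j => Hess q i j * vsum (fun k => M j k * P1 p q k))
       - h * (1 + v * h / 2) * exp (- v * h) * f q i
       - (1 + v * h / 2) * exp (- v * h) * vsum (fun r => sigma i r * dW r)) ->
  (forall p q i,
     Q1 p q i = q i
       + h * (1 - v * h / 2) * exp (v * h) * vsum (fun k => M i k * P1 p q k)
       + h ^ 2 / 2 * vsum (fun k => M i k * f q k)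
       + h / 2 * vsum (fun k => M i k * vsum (fun r => sigma k r * dW r))) ->
  exists (Pp Pq Qp Qq : vec d -> vec d -> 'I_d -> 'I_d -> R),
    (* Pp p q i a = dP1_i/dp_a, Pq p q i a = dP1_i/dq_a, etc. *)
    (forall p q i a,
       is_partial (fun p' => P1 p' q i) a p (Pp p q i a) /\
       is_partial (fun q' => P1 p q' i) a q (Pq p q i a) /\
       is_partial (fun p' => Q1 p' q i) a p (Qp p q i a) /\
       is_partial (fun q' => Q1 p q' i) a q (Qq p q i a)) /\
    (* dP1 /\ dQ1 = e^{-vh} dp /\ dq, coefficientwise *)
    (forall p q a b,
       vsum (fun i => Pp p q i a * Qp p q i b - Pp p q i b * Qp p q i a) = 0 /\
       vsum (fun i => Pq p q i a * Qq p q i b - Pq p q i b * Qq p q i a) = 0 /\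
       vsum (fun i => Pp p q i a * Qq p q i b - Pq p q i b * Qp p q i a)
         = exp (- v * h) * kdelta a b).
Proof.
move=> dW P1 Q1 P1_def Q1_def.
have Hess_sym := smooth_hessian_sym HFsmooth Hgrad HHess.
have [T [dHess T_sym]] := smooth_third_partials HFsmooth Hgrad HHess.
have [B AB_BA] := choice _ Hinv.
exact: (scheme_conformally_symplectic HMsym Hess_sym HHess dHess T_sym
          (fun q => proj1 (AB_BA q)) (fun q => proj2 (AB_BA q)) P1_def Q1_def).
Qed.
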